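(* Let $\mathcal{G}=(V,L)$ be a finite connected undirected graph with monitor set $M$ and non-monitor set $N=V\setminus M$, $\sigma=|N|$, and let $P$ be a given set of measurement paths between monitors (Uncontrollable Probing). A set $S\subseteq N$ is $\sigma$-identifiable if and only if $\mathrm{MSC}(v)=\sigma$ for every $v\in S$.
   Context: A failure set is any $F\subseteq N$; a path fails iff it traverses a node of $F$. $P_F$ is the set of paths in $P$ traversing a node of $F$; $F_1,F_2$ distinguishable iff $P_{F_1}\ne P_{F_2}$. $S\subseteq N$ is $k$-identifiable if any two failure sets $F_1,F_2$ with $|F_1|,|F_2|\le k$ and $F_1\cap S\ne F_2\cap S$ are distinguishable. For $v\in N$, $P_v$ is the set of paths in $P$ traversing $v$. $\mathrm{MSC}(v)$ is the minimum cardinality of a set $V'\subseteq N\setminus\{v\}$ with $P_v\subseteq\bigcup_{w\in V'}P_w$; if no such $V'$ exists (e.g. when $v$ lies on a two-hop measurement path monitor–$v$–monitor), $\mathrm{MSC}(v):=\sigma$. *)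

From mathcomp Require Import all_boot.
Set Implicit Arguments. Unset Strict Implicit. Unset Printing Implicit Defensive.

Section Tomography.
Variable V : finType.

Definition nonmon (M : {set V}) : {set V} := ~: M.

Definition measurement_path (e : rel V) (M : {set V}) (p : seq V) : bool :=
  match p with
  | x :: q => [&& q != [::], path e x q, uniq p, x \in M & last x q \in M]
  | [::] => false
  end.

Definition traverses_set (F : {set V}) (p : seq V) : bool := has (fun v => v \in F) p.

Definition P_of (P : seq (seq V)) (F : {set V}) : seq (seq V) :=
  [seq p <- P | traverses_set F p].

Definition P_node (P : seq (seq V)) (v : V) : seq (seq V) := P_of P [set v].

Definition distinguishable (P : seq (seq V)) (F1 F2 : {set V}) : Prop :=
  P_of P F1 <> P_of P F2.

Definition identifiable (M : {set V}) (P : seq (seq V)) (k : nat) (S : {set V}) : Prop :=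
  forall F1 F2 : {set V},
    F1 \subset nonmon M -> F2 \subset nonmon M ->
    #|F1| <= k -> #|F2| <= k ->
    F1 :&: S != F2 :&: S -> distinguishable P F1 F2.

Definition covers (P : seq (seq V)) (v : V) (V' : {set V}) : bool :=
  all (fun p => traverses_set V' p) (P_node P v).

Definition MSC (M : {set V}) (P : seq (seq V)) (v : V) : nat :=
  if [exists V' : {set V}, (V' \subset nonmon M :\ v) && covers P v V']
  then \big[minn/#|nonmon M|]_(V' : {set V} | (V' \subset nonmon M :\ v) && covers P v V') #|V'|
  else #|nonmon M|.

End Tomography.

From mathcomp Require Import all_boot.
Set Implicit Arguments. Unset Strict Implicit. Unset Printing Implicit Defensive.

(* Since |N \ {v}| = sigma - 1, MSC(v) = sigma exactly when N \ {v} fails to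
   cover P_v, i.e. when some path of P meets N only in v.  If N \ {v} covers
   P_v, the failure sets N and N \ {v} fail the same paths although they
   differ on v.  Conversely, a path meeting N only in v fails under a failure
   set F \subset N iff v \in F, so it separates any two failure sets that
   disagree on v. *)

Lemma bigmin_leq (I : finType) (Q : pred I) (G : I -> nat) x j :
  Q j -> \big[minn/x]_(i | Q i) G i <= G j.
Proof.
move=> Qj; rewrite -big_filter.
have : j \in [seq i <- index_enum I | Q i] by rewrite mem_filter Qj mem_index_enum.
elim: [seq i <- index_enum I | Q i] => //= i s IHs; rewrite big_cons inE.
case/predU1P => [<- | /IHs]; first exact: geq_minl.
exact: leq_trans (geq_minr _ _).
Qed.

Section Tomography.
Variable V : finType.
Implicit Types (M A B F : {set V}) (P : seq (seq V)) (p : seq V) (v : V).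

Lemma covers_subset P v A B : covers P v A -> A \subset B -> covers P v B.
Proof.
move=> /allP covA sAB; apply/allP => p Pv_p.
by apply: sub_has (covA p Pv_p) => x; apply: (subsetP sAB).
Qed.

Lemma MSC_eq_card_nonmon M P v : v \in nonmon M ->
  MSC M P v = #|nonmon M| <-> ~~ covers P v (nonmon M :\ v).
Proof.
move=> vN; rewrite /MSC; case: ifPn => [/existsP[W /andP[sW covW]] | noW].
  have covNv := covers_subset covW sW; rewrite covNv; split=> // MSC_card.
  have : \big[minn/#|nonmon M|]_(U : {set V} | (U \subset nonmon M :\ v) && covers P v U) #|U|
           <= #|nonmon M :\ v| by apply: bigmin_leq; rewrite subxx covNv.
  by rewrite MSC_card (cardsD1 v (nonmon M)) vN ltnn.
split=> // _; apply: contra noW => covNv.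
by apply/existsP; exists (nonmon M :\ v); rewrite subxx covNv.
Qed.

Lemma P_of_setD1_covered P v A :
  covers P v (A :\ v) -> P_of P A = P_of P (A :\ v).
Proof.
move=> /allP covAv; apply: eq_in_filter => p Pp; apply/idP/idP; last first.
  by apply: sub_has => x /setD1P[].
case/hasP=> x px Ax; have [xv | xv] := eqVneq x v; last first.
  by apply/hasP; exists x; rewrite // !inE xv.
apply: covAv; rewrite mem_filter Pp andbT.
by apply/hasP; exists x; rewrite // inE xv.
Qed.

Lemma traverses_set_lone A v p F :
  v \in p -> ~~ traverses_set (A :\ v) p -> F \subset A ->
  traverses_set F p = (v \in F).
Proof.
move=> pv lone sFA; apply/hasP/idP => [[x px Fx] | Fv]; last by exists v.
have [<- // | xv] := eqVneq x v.
by case/hasP: lone; exists x; rewrite // !inE xv (subsetP sFA).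
Qed.

Lemma lone_path_distinguishes P A v p F1 F2 :
  p \in P -> v \in p -> ~~ traverses_set (A :\ v) p ->
  F1 \subset A -> F2 \subset A -> (v \in F1) != (v \in F2) ->
  distinguishable P F1 F2.
Proof.
move=> Pp pv lone sF1 sF2 F12 eqP12; move/eqP: F12; apply.
have := congr1 (fun Q => p \in Q) eqP12; rewrite /= !mem_filter Pp !andbT.
by rewrite !(traverses_set_lone pv lone).
Qed.

Lemma setI_neq_witness A B S :
  A :&: S != B :&: S -> exists2 v, v \in S & (v \in A) != (v \in B).
Proof.
move=> AB; apply/exists_inP; apply: contraR AB => /exists_inPn sameS.
apply/eqP/setP => x; rewrite !inE; have [Sx | _] := boolP (x \in S); last by rewrite !andbF.
by move/negPn/eqP: (sameS x Sx) ->.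
Qed.

End Tomography.

Theorem proposition5 (V : finType) (e : rel V) (M : {set V})
    (P : seq (seq V)) (S : {set V}) :
  symmetric e -> irreflexive e ->
  (forall x y : V, connect e x y) ->
  (forall p, p \in P -> measurement_path e M p) ->
  S \subset nonmon M ->
  identifiable M P #|nonmon M| S <->
  (forall v, v \in S -> MSC M P v = #|nonmon M|).
Proof.
move=> _ _ _ _ sSN; split=> [idS v Sv | MSC_card F1 F2 sF1 sF2 _ _ F12].
  have Nv := subsetP sSN v Sv; apply/(MSC_eq_card_nonmon P Nv)/negP => covNv.
  apply: (idS (nonmon M) (nonmon M :\ v)).
  - exact: subxx.
  - exact: subsetDl.
  - exact: leqnn.
  - exact: subset_leq_card (subsetDl _ _).
  - by apply/eqP => /setP/(_ v); rewrite !in_setI in_setD1 Nv Sv eqxx.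
  - exact: P_of_setD1_covered.
have [v Sv F12v] := setI_neq_witness F12.
have /(MSC_eq_card_nonmon P (subsetP sSN v Sv))/allPn[p] := MSC_card v Sv.
rewrite mem_filter => /andP[/hasP[x px /set1P xv] Pp] lone.
by apply: (lone_path_distinguishes Pp _ lone sF1 sF2 F12v); rewrite -xv.
Qed.
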